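(* Let $p$ be a prime and let $f,f'\in\mathcal{R}$. If $f$ is oblivious to $p$ and $f'$ has a transducer with fewer than $p$ states, then $f'f$ is oblivious to $p$.
   Context: An asynchronous binary transducer is $(S,s_0,t,o)$ with $S$ finite, $s_0\in S$, $t\colon S\times\{0,1\}\to S$, $o\colon S\times\{0,1\}\to\{0,1\}^*$; $t$ and $o$ extend to words: for $s\in S$ and $\sigma_1\sigma_2\cdots$ let $s_1=s$, $s_{n+1}=t(s_n,\sigma_n)$, $t(s,\sigma_1\cdots\sigma_n)=s_{n+1}$, $o(s,\sigma_1\sigma_2\cdots)=o(s_1,\sigma_1)o(s_2,\sigma_2)\cdots$. It is a transducer for a homeomorphism $f$ of $\{0,1\}^\omega$ if $f(\psi)=o(s_0,\psi)$ for all $\psi$; $\mathcal{R}$ is the group of homeomorphisms having a transducer. A state $s$ is accessible if $s=t(s_0,\alpha)$ for some finite word $\alpha$. A cycle is a pair $(c,\gamma)$ with $c\in S$ and $\gamma$ a nonempty finite word with $t(c,\gamma)=c$; its length is $|\gamma|$; it is accessible if $c$ is. A transducer is oblivious to $p$ if it has an accessible cycle whose length is not a multiple of $p$; an element of $\mathcal{R}$ is oblivious to $p$ if some transducer for it is. $f'f$ denotes the composition ($f$ first, then $f'$). *)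

From mathcomp Require Import all_boot.
Set Implicit Arguments. Unset Strict Implicit. Unset Printing Implicit Defensive.

(* Cantor space {0,1}^omega, with 0 = false, 1 = true. *)
Definition cantor := nat -> bool.

Definition pref (psi : cantor) (n : nat) : seq bool := mkseq psi n.

(* Continuity for the product (Cantor) topology: every output bit depends
   only on a finite prefix of the input. *)
Definition cantor_continuous (f : cantor -> cantor) : Prop :=
  forall (psi : cantor) (n : nat), exists m : nat,
    forall psi' : cantor, (forall i, i < m -> psi' i = psi i) -> f psi' n = f psi n.

Definition cantor_homeo (f : cantor -> cantor) : Prop :=
  cantor_continuous f /\
  exists g : cantor -> cantor,
    cantor_continuous g /\ cancel f g /\ cancel g f.

(* Asynchronous binary transducer (S, s0, t, o), S finite. *)
Record transducer := Transducer {
  tstate : finType;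
  tinit : tstate;
  ttrans : tstate -> bool -> tstate;
  tout : tstate -> bool -> seq bool }.

Fixpoint ttrans_w (T : transducer) (s : tstate T) (w : seq bool) : tstate T :=
  if w is a :: w' then ttrans_w (ttrans s a) w' else s.

Fixpoint tout_w (T : transducer) (s : tstate T) (w : seq bool) : seq bool :=
  if w is a :: w' then tout s a ++ tout_w (ttrans s a) w' else [::].

(* o(s, psi) = phi as infinite words: every finite partial concatenation is a
   prefix of phi and these prefixes have unbounded length. *)
Definition tout_inf_eq (T : transducer) (s : tstate T) (psi phi : cantor) : Prop :=
  (forall n, let u := tout_w s (pref psi n) in u = pref phi (size u)) /\
  (forall m, exists n, m <= size (tout_w s (pref psi n))).

Definition transducer_for (T : transducer) (f : cantor -> cantor) : Prop :=
  forall psi : cantor, tout_inf_eq (tinit T) psi (f psi).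

Definition in_R (f : cantor -> cantor) : Prop :=
  cantor_homeo f /\ exists T : transducer, transducer_for T f.

Definition accessible (T : transducer) (s : tstate T) : Prop :=
  exists alpha : seq bool, s = ttrans_w (tinit T) alpha.

Definition is_cycle (T : transducer) (c : tstate T) (gamma : seq bool) : Prop :=
  gamma != [::] /\ ttrans_w c gamma = c.

Definition transducer_oblivious (p : nat) (T : transducer) : Prop :=
  exists (c : tstate T) (gamma : seq bool),
    is_cycle c gamma /\ accessible c /\ ~~ (p %| size gamma).

Definition oblivious (p : nat) (f : cantor -> cantor) : Prop :=
  exists T : transducer, transducer_for T f /\ transducer_oblivious p T.

From mathcomp Require Import all_boot.
Set Implicit Arguments. Unset Strict Implicit. Unset Printing Implicit Defensive.

(* Run a transducer T for f with an oblivious accessible cycle (c, gamma),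
   followed by a transducer T' for f' with fewer than p states.  Reading
   gamma^k from (c, x) in the product transducer returns to c in the first
   component and applies the k-th iterate of the map
   y |-> t'(y, o(c, gamma)) in the second.  That orbit becomes periodic with
   a period d <= |S'| < p, so gamma^d is an accessible cycle of the product
   of length d |gamma|, which p does not divide since p is prime. *)

Section Words.

Variable T : transducer.

Lemma ttrans_w_cat (s : tstate T) (w1 w2 : seq bool) :
  ttrans_w s (w1 ++ w2) = ttrans_w (ttrans_w s w1) w2.
Proof. by elim: w1 s => //= a w IH s; rewrite IH. Qed.

Lemma tout_w_cat (s : tstate T) (w1 w2 : seq bool) :
  tout_w s (w1 ++ w2) = tout_w s w1 ++ tout_w (ttrans_w s w1) w2.
Proof. by elim: w1 s => //= a w IH s; rewrite IH catA. Qed.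

End Words.

Lemma pref_add (psi : cantor) (m k : nat) :
  pref psi (m + k) = pref psi m ++ map psi (iota m k).
Proof. by rewrite /pref /mkseq iotaD map_cat. Qed.

Definition word_pow (w : seq bool) (k : nat) : seq bool := flatten (nseq k w).

Lemma size_word_pow (w : seq bool) (k : nat) :
  size (word_pow w k) = k * size w.
Proof. by elim: k => //= k IH; rewrite size_cat IH mulSn. Qed.

Definition comp_transducer (T T' : transducer) : transducer :=
  @Transducer (tstate T * tstate T')%type (tinit T, tinit T')
    (fun st a => (ttrans st.1 a, ttrans_w st.2 (tout st.1 a)))
    (fun st a => tout_w st.2 (tout st.1 a)).

Section Composition.

Variables T T' : transducer.

Lemma comp_ttrans_w (s : tstate T) (s' : tstate T') (w : seq bool) :
  @ttrans_w (comp_transducer T T') (s, s') w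
  = (ttrans_w s w, ttrans_w s' (tout_w s w)).
Proof. by elim: w s s' => //= a w IH s s'; rewrite IH ttrans_w_cat. Qed.

Lemma comp_tout_w (s : tstate T) (s' : tstate T') (w : seq bool) :
  @tout_w (comp_transducer T T') (s, s') w = tout_w s' (tout_w s w).
Proof. by elim: w s s' => //= a w IH s s'; rewrite IH tout_w_cat. Qed.

Lemma transducer_for_comp (f f' : cantor -> cantor) :
  transducer_for T f -> transducer_for T' f' ->
  transducer_for (comp_transducer T T') (fun psi => f' (f psi)).
Proof.
move=> Tf T'f' psi; have [f_pref f_unbounded] := Tf psi.
have [f'_pref f'_unbounded] := T'f' (f psi).
split=> [n | M] /=.
  by rewrite comp_tout_w f_pref; apply: f'_pref.
have [m long_m] := f'_unbounded M; have [n long_n] := f_unbounded m.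
exists n; rewrite comp_tout_w f_pref.
move: (size _) long_n => k le_mk.
rewrite -(subnKC le_mk) pref_add tout_w_cat size_cat.
exact: leq_trans long_m (leq_addr _ _).
Qed.

Lemma comp_ttrans_w_pow (c : tstate T) (gamma : seq bool) (x : tstate T') k :
  ttrans_w c gamma = c ->
  @ttrans_w (comp_transducer T T') (c, x) (word_pow gamma k)
  = (c, iter k (fun y => ttrans_w y (tout_w c gamma)) x).
Proof.
move=> cycle_c; elim: k x => // k IH x.
by rewrite /= ttrans_w_cat comp_ttrans_w cycle_c IH -iterSr.
Qed.

End Composition.

Lemma iter_eventually_periodic (S : finType) (g : S -> S) (x : S) :
  exists i d, [/\ 0 < d, d <= #|S| & iter (i + d) g x = iter i g x].
Proof.
have /trajectP[i lt_in iter_i] : looping g x #|S|.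
  apply: contraT; rewrite -looping_uniq => /card_uniqP.
  rewrite size_traject => card_traj.
  by have := max_card (mem (traject g x #|S|.+1)); rewrite card_traj ltnn.
exists i, (#|S| - i); rewrite subn_gt0 lt_in leq_subr subnKC ?iter_i //.
exact: ltnW.
Qed.

Lemma transducer_oblivious_comp (p : nat) (T T' : transducer) :
  prime p -> transducer_oblivious p T -> #|tstate T'| < p ->
  transducer_oblivious p (comp_transducer T T').
Proof.
move=> p_prime [c [gamma [[gamma_nil cycle_c] [[alpha c_def] p_ndvd]]]] small_T'.
pose g (y : tstate T') := ttrans_w y (tout_w c gamma).
pose s1 := ttrans_w (tinit T') (tout_w (tinit T) alpha).
have [i [d [d_gt0 le_d iter_d]]] := iter_eventually_periodic g s1.
exists (c, iter i g s1), (word_pow gamma d); split; [split | split].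
- by rewrite -size_eq0 size_word_pow muln_eq0 negb_or -lt0n d_gt0 size_eq0.
- by rewrite comp_ttrans_w_pow // -iterD addnC iter_d.
- exists (alpha ++ word_pow gamma i).
  by rewrite ttrans_w_cat comp_ttrans_w -c_def comp_ttrans_w_pow.
- rewrite size_word_pow Euclid_dvdM // negb_or p_ndvd andbT.
  by rewrite gtnNdvd // (leq_ltn_trans le_d small_T').
Qed.

Theorem lemma3p4 (p : nat) (f f' : cantor -> cantor) :
  prime p -> in_R f -> in_R f' ->
  oblivious p f ->
  (exists T : transducer, transducer_for T f' /\ #|tstate T| < p) ->
  oblivious p (fun psi => f' (f psi)).
Proof.
move=> p_prime _ _ [T [Tf obl_T]] [T' [T'f' small_T']].
exists (comp_transducer T T'); split; first exact: transducer_for_comp.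
exact: transducer_oblivious_comp.
Qed.
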